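(* Let $q\in\mathbb{C}$ with $|q|<1$, $r\in\mathbb{N}$, $w_1,\dots,w_r>0$, $a_1,\dots,a_r\in\mathbb{C}$, $x\in\mathbb{C}$ with $\Re(x)>0$, and let $\chi$ be a Dirichlet character with conductor $f\in\mathbb{N}$, $f$ odd. Define $E_{n,\chi,q}^{(r)}(x|w_1,\dots,w_r;a_1,\dots,a_r)$ by $$2^r\sum_{m_1,\dots,m_r=0}^{\infty}\Big(\prod_{j=1}^r\chi(m_j)\Big)(-1)^{m_1+\cdots+m_r}q^{a_1m_1+\cdots+a_rm_r}e^{[x+\sum_{j=1}^r w_jm_j]_q t}=\sum_{n=0}^{\infty}E_{n,\chi,q}^{(r)}(x|w_1,\dots,w_r;a_1,\dots,a_r)\frac{t^n}{n!},$$ and the Barnes-type multiple $q$-$l$-function by $$l_{q,\chi}^{(r)}(s,x|w_1,\dots,w_r;a_1,\dots,a_r)=2^r\sum_{m_1,\dots,m_r=0}^{\infty}\frac{\Big(\prod_{j=1}^r\chi(m_j)\Big)(-1)^{m_1+\cdots+m_r}q^{m_1a_1+\cdots+m_ra_r}}{[x+w_1m_1+\cdots+w_rm_r]_q^s},\quad s\in\mathbb{C}$$ (extended meromorphically to the whole $s$-plane). Then for every integer $n\ge 0$, $$l_{q,\chi}^{(r)}(-n,x|w_1,\dots,w_r;a_1,\dots,a_r)=E_{n,\chi,q}^{(r)}(x|w_1,\dots,w_r;a_1,\dots,a_r).$$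
   Context: For complex $q$ with $|q|<1$, $[y]_q=\frac{1-q^y}{1-q}$, and $[y]_q^{s}$ denotes a complex power of $[y]_q$. *)

From Stdlib Require Import Reals Lra Lia List.
From Coquelicot Require Import Coquelicot.
Open Scope R_scope.

Definition cexp (z : C) : C :=
  (exp (Re z) * cos (Im z), exp (Re z) * sin (Im z)).

(** Principal argument in (-PI, PI], with carg 0 = 0. *)
Definition carg (z : C) : R :=
  let a := Re z in let b := Im z in
  match Rlt_dec 0 a with
  | left _ => atan (b / a)
  | right _ =>
    match Rlt_dec a 0 with
    | left _ => match Rle_dec 0 b with
                | left _ => atan (b / a) + PI
                | right _ => atan (b / a) - PI
                end
    | right _ =>
      match Rlt_dec 0 b with
      | left _ => PI / 2
      | right _ => match Rlt_dec b 0 with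
                   | left _ => - (PI / 2)
                   | right _ => 0
                   end
      end
    end
  end.

Definition clog (z : C) : C := (ln (Cmod z), carg z).

(** Complex power z^s := exp(s Log z) (principal branch); for z = 0 we use
    0^0 = 1 and 0^s = 0 for s <> 0. *)
Definition cpow (z s : C) : C :=
  match Req_EM_T (Re z) 0, Req_EM_T (Im z) 0 with
  | left _, left _ =>
      match Req_EM_T (Re s) 0, Req_EM_T (Im s) 0 with
      | left _, left _ => 1%C
      | _, _ => 0%C
      end
  | _, _ => cexp (s * clog z)%C
  end.

Definition qint (q y : C) : C := ((1 - cpow q y) / (1 - q))%C.

Definition is_dirichlet_char (f : nat) (chi : nat -> C) : Prop :=
  (1 <= f)%nat /\
  (forall m, chi (m + f)%nat = chi m) /\
  (forall m n, chi (m * n)%nat = (chi m * chi n)%C) /\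
  chi 1%nat = 1%C /\
  (forall m, chi m = 0%C <-> Nat.gcd m f <> 1%nat).

(** chi is a Dirichlet character with conductor f, i.e. a primitive
    character modulo f: no proper divisor d of f is such that chi is
    trivial on the residues coprime to f that are congruent to 1 mod d. *)
Definition has_conductor (f : nat) (chi : nat -> C) : Prop :=
  is_dirichlet_char f chi /\
  forall d : nat, Nat.divide d f ->
    (forall m, Nat.gcd m f = 1%nat -> Nat.modulo m d = Nat.modulo 1 d -> chi m = 1%C) ->
    d = f.

(** Finite sums / products over j = 0 .. r-1 (indices of w_1..w_r etc.). *)
Definition csum (r : nat) (g : nat -> C) : C :=
  fold_right (fun j acc => (g j + acc)%C) 0%C (seq 0 r).
Definition cprod (r : nat) (g : nat -> C) : C :=
  fold_right (fun j acc => (g j * acc)%C) 1%C (seq 0 r).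
Definition nsum (r : nat) (m : nat -> nat) : nat :=
  fold_right (fun j acc => (m j + acc)%nat) 0%nat (seq 0 r).

(** Multi-indices (m_1,...,m_r) are encoded as m : nat -> nat with
    m_{j+1} = m j.  [cons_idx k m] prepends k. *)
Definition cons_idx (k : nat) (m : nat -> nat) : nat -> nat :=
  fun j => match j with O => k | S j' => m j' end.

(** [is_msum r F l]: the r-fold series sum_{m_1,...,m_r >= 0} F(m)
    converges (as an iterated series, m_1 outermost) with value l. *)
Fixpoint is_msum (r : nat) (F : (nat -> nat) -> C) (l : C) : Prop :=
  match r with
  | O => F (fun _ => O) = l
  | S r' => exists g : nat -> C,
      (forall k, is_msum r' (fun m => F (cons_idx k m)) (g k)) /\
      is_series g l
  end.

Definition coef (q : C) (chi : nat -> C) (r : nat) (a : nat -> C)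
  (m : nat -> nat) : C :=
  (RtoC (2 ^ r) * cprod r (fun j => chi (m j)) * RtoC ((-1) ^ nsum r m)
   * cpow q (csum r (fun j => a j * RtoC (INR (m j)))))%C.

Definition shift (x : C) (r : nat) (w : nat -> R) (m : nat -> nat) : C :=
  (x + csum r (fun j => RtoC (w j * INR (m j))))%C.

Definition gen_term (q : C) (chi : nat -> C) (r : nat) (w : nat -> R)
  (a : nat -> C) (x t : C) (m : nat -> nat) : C :=
  (coef q chi r a m * cexp (qint q (shift x r w m) * t))%C.

Definition l_term (q : C) (chi : nat -> C) (r : nat) (w : nat -> R)
  (a : nat -> C) (x s : C) (m : nat -> nat) : C :=
  (coef q chi r a m / cpow (qint q (shift x r w m)) s)%C.

From Stdlib Require Import Reals Lra Lia List Factorial ClassicalEpsilon RList.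
From Coquelicot Require Import Coquelicot.
Open Scope R_scope.

(* Write [c m] for the coefficient 2^r chi(m) (-1)^|m| q^(a.m) and [Q m] for [x + w.m]_q.
   For q <> 0 we have |c m| <= A rho^|m| with rho < 1 (chi is periodic, hence bounded, and
   |q^(a_j)| < 1) and |Q m| <= B uniformly (Re (x + w.m) >= Re x > 0 and |q| < 1).  This
   domination allows expanding every exp (Q m t) in powers of t and interchanging the
   summations, so the generating function is sum_n (sum_m c m (Q m)^n) t^n / n!.  Comparing
   coefficients of power series gives E_n = sum_m c m (Q m)^n, which is l(-n) because dividing
   by (Q m)^(-n) multiplies by (Q m)^n.  For q = 0 every Q m equals 1, the generating function
   is (sum_m c m) e^t, and the same comparison applies. *)

(** * Complex series *)

Lemma Re_sum_n (f : nat -> C) n : Re (sum_n f n) = sum_n (fun k => Re (f k)) n.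
Proof. induction n; [rewrite !sum_O | rewrite !sum_Sn, <- IHn]; reflexivity. Qed.

Lemma Im_sum_n (f : nat -> C) n : Im (sum_n f n) = sum_n (fun k => Im (f k)) n.
Proof. induction n; [rewrite !sum_O | rewrite !sum_Sn, <- IHn]; reflexivity. Qed.

Lemma is_series_C (f : nat -> C) (l : C) :
  is_series f l <->
  is_series (fun n => Re (f n)) (Re l) /\ is_series (fun n => Im (f n)) (Im l).
Proof.
  unfold is_series. split.
  - intros H. pose proof (proj1 (filterlim_locally (U := C_UniformSpace) _ _) H) as Hf.
    split; apply (filterlim_locally (U := R_UniformSpace)); intros eps;
      generalize (Hf eps); apply filter_imp; intros n [HRe HIm].
    + rewrite <- Re_sum_n; exact HRe.
    + rewrite <- Im_sum_n; exact HIm.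
  - intros [HRe HIm]. apply (filterlim_locally (U := C_UniformSpace)). intros eps.
    generalize (filter_and _ _
      (proj1 (filterlim_locally (U := R_UniformSpace) _ _) HRe eps)
      (proj1 (filterlim_locally (U := R_UniformSpace) _ _) HIm eps)).
    apply filter_imp; intros n [H1 H2]; split.
    + rewrite Re_sum_n; exact H1.
    + rewrite Im_sum_n; exact H2.
Qed.

Lemma is_series_C_unique (f : nat -> C) (l l' : C) :
  is_series f l -> is_series f l' -> l = l'.
Proof. apply (filterlim_locally_unique (V := C_NormedModule) (sum_n f)). Qed.

Lemma is_series_Cmult_l (g : nat -> C) (l c : C) :
  is_series g l -> is_series (fun k => (c * g k)%C) (c * l)%C.
Proof. exact (is_series_scal (K := C_AbsRing) (V := C_NormedModule) c g l). Qed.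

Lemma is_series_Cmult_r (g : nat -> C) (l c : C) :
  is_series g l -> is_series (fun k => (g k * c)%C) (l * c)%C.
Proof.
  intros H. rewrite Cmult_comm.
  apply (is_series_ext (fun k => c * g k)%C); [intros k; apply Cmult_comm|].
  now apply is_series_Cmult_l.
Qed.

Lemma ex_series_Rmult_l (c : R) (a : nat -> R) :
  ex_series a -> ex_series (fun n => c * a n).
Proof. exact (ex_series_scal_l c a). Qed.

Lemma Series_Rabs_dominated (b c : nat -> R) :
  (forall n, Rabs (b n) <= c n) -> ex_series c ->
  ex_series b /\ Rabs (Series b) <= Series c.
Proof.
  intros Hbc Hc.
  assert (Habs : ex_series (fun n => Rabs (b n))).
  { apply (ex_series_le (V := R_CompleteNormedModule) _ c); [|exact Hc].
    intros n. change (Rabs (Rabs (b n)) <= c n). now rewrite Rabs_Rabsolu. }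
  split; [now apply ex_series_Rabs|].
  eapply Rle_trans; [now apply Series_Rabs|].
  apply Series_le; [|exact Hc]. intros n; split; [apply Rabs_pos|apply Hbc].
Qed.

Lemma ex_series_sum_n (a : nat -> nat -> R) (K : nat) :
  (forall k, ex_series (fun j => a j k)) -> ex_series (fun j => sum_n (a j) K).
Proof.
  intros Ha. induction K as [|K IH].
  - apply (ex_series_ext (fun j => a j 0%nat)); [intros j; now rewrite sum_O|apply Ha].
  - apply (ex_series_ext (fun j => sum_n (a j) K + a j (S K))).
    + intros j. now rewrite sum_Sn.
    + now apply (ex_series_plus (V := R_NormedModule)).
Qed.

Lemma Series_sum_n (a : nat -> nat -> R) (K : nat) :
  (forall k, ex_series (fun j => a j k)) ->
  sum_n (fun k => Series (fun j => a j k)) K = Series (fun j => sum_n (a j) K).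
Proof.
  intros Ha. induction K as [|K IH].
  - rewrite sum_O. apply Series_ext. intros j; now rewrite sum_O.
  - rewrite sum_Sn, IH. change (plus ?x ?y) with (x + y).
    rewrite <- Series_plus; [|now apply ex_series_sum_n|apply Ha].
    apply Series_ext. intros j; now rewrite sum_Sn.
Qed.

Lemma Series_minus_sum_n (a : nat -> R) (K : nat) :
  ex_series a -> Series a - sum_n a K = Series (fun k => a (S K + k)%nat).
Proof.
  intros Ha. rewrite (Series_incr_n a (S K)); [|lia|exact Ha].
  simpl pred. rewrite sum_n_Reals. ring.
Qed.

Lemma is_lim_seq_Series_tail (v : nat -> R) :
  ex_series v -> is_lim_seq (fun K => Series (fun k => v (S K + k)%nat)) 0.
Proof.
  intros Hv.
  apply (is_lim_seq_ext (fun K => Series v - sum_n v K));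
    [intros K; now apply Series_minus_sum_n|].
  replace (Finite 0) with (Rbar_minus (Series v) (Series v)) by (simpl; f_equal; ring).
  apply is_lim_seq_minus'; [apply is_lim_seq_const|now apply Series_correct].
Qed.

Lemma is_series_swap_R (a : nat -> nat -> R) (u v : nat -> R) :
  (forall j k, Rabs (a j k) <= u j * v k) -> ex_series u -> ex_series v ->
  is_series (fun k => Series (fun j => a j k)) (Series (fun j => Series (a j))).
Proof.
  intros Ha Eu Ev.
  assert (Ecol : forall k, ex_series (fun j => a j k)).
  { intros k. apply (Series_Rabs_dominated _ (fun j => u j * v k)); [intros j; apply Ha|].
    now apply ex_series_scal_r. }
  assert (Erow : forall j, ex_series (a j)).
  { intros j. apply (Series_Rabs_dominated _ (fun k => u j * v k)); [intros k; apply Ha|].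
    now apply ex_series_Rmult_l. }
  set (T := Series (fun j => Series (a j))).
  set (V := fun K => Series (fun k => v (S K + k)%nat)).
  assert (Hrow_tail : forall j K, Rabs (Series (fun k => a j (S K + k)%nat)) <= u j * V K).
  { intros j K. unfold V. rewrite <- Series_scal_l.
    apply Series_Rabs_dominated; [intros k; apply Ha|].
    apply ex_series_Rmult_l, (ex_series_incr_n v (S K)), Ev. }
  assert (Htail : forall K,
    Rabs (T - sum_n (fun k => Series (fun j => a j k)) K) <= Series u * V K).
  { intros K. rewrite Series_sum_n by exact Ecol. unfold T.
    rewrite <- Series_minus; [|apply (Series_Rabs_dominated _ (fun j => u j * Series v))|
                               now apply ex_series_sum_n].
    - rewrite <- Series_scal_r. apply Series_Rabs_dominated.
      + intros j. rewrite Series_minus_sum_n by apply Erow. apply Hrow_tail.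
      + now apply ex_series_scal_r.
    - intros j. rewrite <- Series_scal_l. apply Series_Rabs_dominated; [intros k; apply Ha|].
      now apply ex_series_Rmult_l.
    - now apply ex_series_scal_r. }
  assert (HV : is_lim_seq (fun K => Series u * V K) 0).
  { replace (Finite 0) with (Finite (Series u * 0)) by (f_equal; ring).
    apply (is_lim_seq_scal_l V (Series u) 0), is_lim_seq_Series_tail, Ev. }
  change (is_lim_seq (sum_n (fun k => Series (fun j => a j k))) T).
  apply (is_lim_seq_le_le (fun K => T - Series u * V K) _ (fun K => T + Series u * V K)).
  - intros K. specialize (Htail K). apply Rabs_le_between in Htail. lra.
  - replace (Finite T) with (Rbar_minus T 0) by (simpl; f_equal; ring).
    apply is_lim_seq_minus'; [apply is_lim_seq_const|exact HV].
  - replace (Finite T) with (Rbar_plus T 0) by (simpl; f_equal; ring).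
    apply is_lim_seq_plus'; [apply is_lim_seq_const|exact HV].
Qed.

Lemma Rabs_Im_le_Cmod (z : C) : Rabs (Im z) <= Cmod z.
Proof.
  destruct z as [x y]. unfold Cmod; simpl. rewrite <- sqrt_Rsqr_abs.
  apply sqrt_le_1_alt. unfold Rsqr. nra.
Qed.

Lemma Cmod_le_Rabs_Re_Im (z : C) : Cmod z <= Rabs (Re z) + Rabs (Im z).
Proof.
  destruct z as [x y]. unfold Cmod; simpl.
  apply Rsqr_incr_0_var; [|generalize (Rabs_pos x) (Rabs_pos y); lra].
  rewrite Rsqr_sqrt by nra. unfold Rsqr. rewrite !Rmult_1_r.
  rewrite <- (Rabs_right (x * x)), <- (Rabs_right (y * y)), !Rabs_mult by nra.
  generalize (Rabs_pos x) (Rabs_pos y); nra.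
Qed.

(* Coquelicot's [Series] is real-valued; a complex series is summed componentwise. *)
Definition CSeries (f : nat -> C) : C :=
  (Series (fun n => Re (f n)), Series (fun n => Im (f n))).

Lemma CSeries_ext (f g : nat -> C) : (forall n, f n = g n) -> CSeries f = CSeries g.
Proof. intros H. unfold CSeries. f_equal; apply Series_ext; intros n; now rewrite H. Qed.

Lemma CSeries_dominated (f : nat -> C) (b : nat -> R) :
  (forall n, Cmod (f n) <= b n) -> ex_series b ->
  is_series f (CSeries f) /\ Cmod (CSeries f) <= 2 * Series b.
Proof.
  intros Hfb Hb.
  destruct (Series_Rabs_dominated (fun n => Re (f n)) b) as [ERe BRe]; [|exact Hb|].
  { intros n. eapply Rle_trans; [apply re_le_Cmod|apply Hfb]. }
  destruct (Series_Rabs_dominated (fun n => Im (f n)) b) as [EIm BIm]; [|exact Hb|].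
  { intros n. eapply Rle_trans; [apply Rabs_Im_le_Cmod|apply Hfb]. }
  split.
  - apply is_series_C; split; now apply Series_correct.
  - eapply Rle_trans; [apply Cmod_le_Rabs_Re_Im|]. simpl. lra.
Qed.

Lemma is_series_swap_C (a : nat -> nat -> C) (u v : nat -> R) :
  (forall j k, Cmod (a j k) <= u j * v k) -> ex_series u -> ex_series v ->
  is_series (fun k => CSeries (fun j => a j k)) (CSeries (fun j => CSeries (a j))).
Proof.
  intros Ha Eu Ev. apply is_series_C; split; simpl.
  - apply (is_series_swap_R (fun j k => Re (a j k)) u v); [|exact Eu|exact Ev].
    intros j k; eapply Rle_trans; [apply re_le_Cmod|apply Ha].
  - apply (is_series_swap_R (fun j k => Im (a j k)) u v); [|exact Eu|exact Ev].
    intros j k; eapply Rle_trans; [apply Rabs_Im_le_Cmod|apply Ha].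
Qed.

Lemma is_series_swap_geom (S : nat -> nat -> C) (T : nat -> C) (M rho : R) (b : nat -> R) :
  Rabs rho < 1 -> ex_series b ->
  (forall j k, Cmod (S j k) <= M * rho ^ j * b k) -> (forall j, is_series (S j) (T j)) ->
  (forall k, is_series (fun j => S j k) (CSeries (fun j => S j k))) /\
  (forall k, Cmod (CSeries (fun j => S j k)) <= 2 / (1 - rho) * M * b k) /\
  is_series (fun k => CSeries (fun j => S j k)) (CSeries T) /\
  is_series T (CSeries T).
Proof.
  intros Hrho Eb HS HT.
  assert (Eg : ex_series (fun j => rho ^ j)) by now apply ex_series_geom.
  assert (Hcol : forall k, is_series (fun j => S j k) (CSeries (fun j => S j k)) /\
                   Cmod (CSeries (fun j => S j k)) <= 2 / (1 - rho) * M * b k).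
  { intros k. destruct (CSeries_dominated (fun j => S j k) (fun j => M * b k * rho ^ j))
      as [Hk Bk]; [intros j; rewrite Rmult_comm, <- Rmult_assoc, (Rmult_comm _ M); apply HS|
                   now apply ex_series_Rmult_l|].
    split; [exact Hk|]. rewrite Series_scal_l in Bk.
    change (Series (pow rho)) with (Series (fun j => rho ^ j)) in Bk.
    rewrite Series_geom in Bk by exact Hrho.
    eapply Rle_trans; [exact Bk|right; unfold Rdiv; ring]. }
  assert (HTS : forall j, T j = CSeries (S j)).
  { intros j. apply (is_series_C_unique (S j)); [apply HT|].
    apply (CSeries_dominated _ (fun k => M * rho ^ j * b k)); [apply HS|].
    now apply ex_series_Rmult_l. }
  assert (HsumT : is_series T (CSeries T)).
  { apply (CSeries_dominated _ (fun j => 2 * M * Series b * rho ^ j));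
      [|now apply ex_series_Rmult_l].
    intros j. rewrite HTS.
    destruct (CSeries_dominated (S j) (fun k => M * rho ^ j * b k)) as [_ Bj];
      [apply HS|now apply ex_series_Rmult_l|].
    rewrite Series_scal_l in Bj. eapply Rle_trans; [exact Bj|right; ring]. }
  split; [intros k; apply Hcol|]. split; [intros k; apply Hcol|].
  split; [|exact HsumT].
  rewrite (CSeries_ext T (fun j => CSeries (S j))) by exact HTS.
  apply (is_series_swap_C S (fun j => M * rho ^ j) b); [|now apply ex_series_Rmult_l|exact Eb].
  intros j k. apply HS.
Qed.

(** * Iterated multiple series *)

Lemma nsum_cons (r k : nat) (m : nat -> nat) :
  nsum (S r) (cons_idx k m) = (k + nsum r m)%nat.
Proof.
  unfold nsum. simpl. f_equal.
  assert (Hshift : forall s,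
    fold_right (fun j acc => (cons_idx k m j + acc)%nat) 0%nat (seq (S s) r)
    = fold_right (fun j acc => (m j + acc)%nat) 0%nat (seq s r)).
  { induction r as [|r IH]; intros s; simpl; [reflexivity|now rewrite IH]. }
  apply Hshift.
Qed.

Lemma is_msum_ext (r : nat) (F G : (nat -> nat) -> C) (l : C) :
  (forall m, F m = G m) -> is_msum r F l -> is_msum r G l.
Proof.
  revert F G l. induction r as [|r IH]; intros F G l HFG H; simpl in *.
  - now rewrite <- HFG.
  - destruct H as [g [Hg Hl]]. exists g. split; [|exact Hl].
    intros k. apply (IH _ _ _ (fun m => HFG (cons_idx k m)) (Hg k)).
Qed.

Lemma is_msum_unique (r : nat) (F : (nat -> nat) -> C) (l l' : C) :
  is_msum r F l -> is_msum r F l' -> l = l'.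
Proof.
  revert F l l'. induction r as [|r IH]; intros F l l' H H'; simpl in *.
  - congruence.
  - destruct H as [g [Hg Hl]], H' as [g' [Hg' Hl']].
    apply (is_series_C_unique g); [exact Hl|].
    apply (is_series_ext g'); [|exact Hl']. intros k. eapply IH; eauto.
Qed.

Lemma is_msum_Cmult_r (r : nat) (F : (nat -> nat) -> C) (l c : C) :
  is_msum r F l -> is_msum r (fun m => (F m * c)%C) (l * c)%C.
Proof.
  revert F l. induction r as [|r IH]; intros F l H; simpl in *.
  - now rewrite H.
  - destruct H as [g [Hg Hl]]. exists (fun k => (g k * c)%C). split.
    + intros k. apply (IH (fun m => F (cons_idx k m))), Hg.
    + now apply is_series_Cmult_r.
Qed.

Lemma is_msum_series_swap (r : nat) (F : (nat -> nat) -> nat -> C) (A rho : R) (b : nat -> R) :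
  Rabs rho < 1 -> ex_series b ->
  (forall m k, Cmod (F m k) <= A * rho ^ nsum r m * b k) ->
  exists (S : nat -> C) (T : C),
    (forall k, is_msum r (fun m => F m k) (S k)) /\
    (forall k, Cmod (S k) <= A * (2 / (1 - rho)) ^ r * b k) /\
    is_series S T /\
    (forall H, (forall m, is_series (F m) (H m)) -> is_msum r H T).
Proof.
  revert F A. induction r as [|r IH]; intros F A Hrho Eb HF.
  - set (F0 := F (fun _ => 0%nat)).
    assert (HF0 : forall k, Cmod (F0 k) <= A * b k)
      by (intros k; unfold F0; specialize (HF (fun _ => 0%nat) k); simpl in HF; lra).
    destruct (CSeries_dominated F0 (fun k => A * b k) HF0) as [HS _];
      [now apply ex_series_Rmult_l|].
    exists F0, (CSeries F0).
    split; [intros k; reflexivity|]. split; [intros k; simpl; rewrite Rmult_1_r; apply HF0|].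
    split; [exact HS|]. intros H HH. simpl. eapply is_series_C_unique; [apply HH|exact HS].
  - set (c := 2 / (1 - rho)).
    assert (Hrow : forall j, exists ST : (nat -> C) * C,
      (forall k, is_msum r (fun m => F (cons_idx j m) k) (fst ST k)) /\
      (forall k, Cmod (fst ST k) <= A * rho ^ j * c ^ r * b k) /\
      is_series (fst ST) (snd ST) /\
      (forall H, (forall m, is_series (F (cons_idx j m)) (H m)) -> is_msum r H (snd ST))).
    { intros j. destruct (IH (fun m => F (cons_idx j m)) (A * rho ^ j) Hrho Eb) as [S [T HST]].
      - intros m k. specialize (HF (cons_idx j m) k). rewrite nsum_cons, pow_add in HF.
        eapply Rle_trans; [exact HF|right; ring].
      - now exists (S, T). }
    apply choice in Hrow as [ST HST].
    destruct (is_series_swap_geom (fun j => fst (ST j)) (fun j => snd (ST j)) (A * c ^ r) rho b)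
      as [Hcol [Hbound [HS HT]]]; [exact Hrho|exact Eb| |intros j; apply HST|].
    { intros j k. destruct (HST j) as [_ [Hb _]]. eapply Rle_trans; [apply Hb|right; ring]. }
    exists (fun k => CSeries (fun j => fst (ST j) k)), (CSeries (fun j => snd (ST j))).
    split; [|split; [|split; [exact HS|]]].
    + intros k. exists (fun j => fst (ST j) k). split; [intros j; apply HST|apply Hcol].
    + intros k. eapply Rle_trans; [apply Hbound|right; unfold c; simpl; ring].
    + intros H HH. exists (fun j => snd (ST j)). split; [|exact HT].
      intros j. apply HST. intros m. apply HH.
Qed.

(** * The complex exponential and complex powers *)

(* Coquelicot's structures can hide the carrier [R] or [C] of an equation from [ring]. *)
Ltac Rring := match goal with |- ?x = ?y => change (@eq R x y) end; ring.
Ltac Cring := match goal with |- ?x = ?y => change (@eq C x y) end; ring.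
Ltac Cfield := match goal with |- ?x = ?y => change (@eq C x y) end; field.

Lemma pow_n_C_O (z : C) : pow_n z 0 = RtoC 1.
Proof. reflexivity. Qed.

Lemma pow_n_C_S (z : C) (n : nat) : pow_n z (S n) = (z * pow_n z n)%C.
Proof. reflexivity. Qed.

Lemma pow_n_Cmult (u v : C) (k : nat) : pow_n (u * v)%C k = (pow_n u k * pow_n v k)%C.
Proof.
  induction k as [|k IH]; [rewrite !pow_n_C_O; Cring|].
  rewrite !pow_n_C_S, IH. generalize (pow_n u k) (pow_n v k); intros; Cring.
Qed.

Lemma pow_n_RtoC (s : R) (k : nat) : pow_n (RtoC s) k = RtoC (s ^ k).
Proof.
  induction k as [|k IH]; [reflexivity|]. now rewrite pow_n_C_S, IH, <- RtoC_mult.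
Qed.

Lemma Cmod_pow_n (z : C) (n : nat) : Cmod (pow_n z n) = Cmod z ^ n.
Proof.
  induction n as [|n IH]; [apply Cmod_1|]. now rewrite pow_n_C_S, Cmod_mult, IH.
Qed.

Lemma cexp_add (u v : C) : cexp (u + v)%C = (cexp u * cexp v)%C.
Proof.
  destruct u as [a b], v as [c d]. unfold cexp; simpl.
  rewrite exp_plus, cos_plus, sin_plus. unfold Cmult; simpl. f_equal; ring.
Qed.

Lemma cexp_0 : cexp 0%C = 1%C.
Proof. unfold cexp; simpl. rewrite exp_0, cos_0, sin_0. unfold RtoC. f_equal; ring. Qed.

Lemma Cmod_cexp (u : C) : Cmod (cexp u) = exp (Re u).
Proof.
  destruct u as [a b]. unfold cexp, Cmod; simpl.
  match goal with |- sqrt ?e = _ =>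
    replace e with (exp a ^ 2 * ((sin b)² + (cos b)²)) by (unfold Rsqr; ring) end.
  rewrite sin2_cos2, Rmult_1_r. apply sqrt_pow2. left; apply exp_pos.
Qed.

Lemma cexp_nat_mult (n : nat) (u : C) : cexp (RtoC (INR n) * u)%C = pow_n (cexp u) n.
Proof.
  induction n as [|n IH].
  - simpl. rewrite Cmult_0_l. apply cexp_0.
  - rewrite S_INR, RtoC_plus, pow_n_C_S, <- IH, <- cexp_add. f_equal. Cring.
Qed.

Lemma sqrt_sum_sq_factor (x y : R) : x <> 0 -> sqrt (x ^ 2 + y ^ 2) = Rabs x * sqrt (1 + (y / x)²).
Proof.
  intros Hx. rewrite <- sqrt_Rsqr_abs, <- sqrt_mult.
  - f_equal. unfold Rsqr. field. exact Hx.
  - apply Rle_0_sqr.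
  - generalize (Rle_0_sqr (y / x)). lra.
Qed.

Lemma cexp_clog (z : C) : z <> 0%C -> cexp (clog z) = z.
Proof.
  intros Hz. destruct z as [x y]. unfold clog, cexp, Re, Im. cbn [fst snd].
  rewrite exp_ln by now apply Cmod_gt_0.
  change (Cmod (x, y)) with (sqrt (x ^ 2 + y ^ 2)).
  unfold carg, Re, Im. cbn [fst snd].
  assert (Hs : 0 < sqrt (1 + (y / x)²))
    by (apply sqrt_lt_R0; generalize (Rle_0_sqr (y / x)); lra).
  destruct (Rlt_dec 0 x) as [Hx|Hx].
  - rewrite cos_atan, sin_atan, sqrt_sum_sq_factor, Rabs_right by lra.
    f_equal; field; lra.
  - destruct (Rlt_dec x 0) as [Hx'|Hx'].
    + rewrite sqrt_sum_sq_factor, Rabs_left by lra.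
      destruct (Rle_dec 0 y).
      * rewrite neg_cos, neg_sin, cos_atan, sin_atan. f_equal; field; lra.
      * rewrite cos_minus, sin_minus, cos_PI, sin_PI, cos_atan, sin_atan. f_equal; field; lra.
    + assert (x = 0) by lra. subst x.
      destruct (Rlt_dec 0 y).
      * rewrite cos_PI2, sin_PI2. replace (0 ^ 2 + y ^ 2) with (y ^ 2) by ring.
        rewrite sqrt_pow2 by lra. f_equal; ring.
      * destruct (Rlt_dec y 0).
        -- rewrite cos_neg, sin_neg, cos_PI2, sin_PI2.
           replace (0 ^ 2 + y ^ 2) with ((- y) ^ 2) by ring.
           rewrite sqrt_pow2 by lra. f_equal; ring.
        -- exfalso. apply Hz. unfold RtoC. f_equal; lra.
Qed.

Lemma exp_le_compat (x y : R) : x <= y -> exp x <= exp y.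
Proof. intros [Hlt|Heq]; [left; now apply exp_increasing|right; now rewrite Heq]. Qed.

Lemma is_derive_Re_Cmult_cexp (u w : C) (s : R) :
  is_derive (fun s => Re (u * cexp (RtoC s * w))) s (Re (u * w * cexp (RtoC s * w))).
Proof.
  destruct u as [u1 u2], w as [w1 w2]. unfold cexp; simpl. unfold Rminus.
  auto_derive; [auto|ring].
Qed.

Lemma Derive_n_Re_Cmult_cexp (u w : C) (n : nat) (s : R) :
  Derive_n (fun s => Re (u * cexp (RtoC s * w))) n s = Re (u * pow_n w n * cexp (RtoC s * w)).
Proof.
  revert s. induction n as [|n IH]; intros s.
  - simpl Derive_n. now rewrite pow_n_C_O, Cmult_1_r.
  - simpl Derive_n. rewrite (Derive_ext _ _ _ IH).
    apply is_derive_unique. rewrite pow_n_C_S.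
    replace (u * (w * pow_n w n))%C with (u * pow_n w n * w)%C by Cring.
    apply is_derive_Re_Cmult_cexp.
Qed.

Lemma ex_derive_n_Re_Cmult_cexp (u w : C) (n : nat) (s : R) :
  ex_derive_n (fun s => Re (u * cexp (RtoC s * w))) n s.
Proof.
  destruct n as [|n]; [exact I|]. simpl.
  apply (ex_derive_ext (fun s => Re (u * pow_n w n * cexp (RtoC s * w)))).
  - intros t. symmetry. apply Derive_n_Re_Cmult_cexp.
  - eexists. apply is_derive_Re_Cmult_cexp.
Qed.

(* Taylor's theorem at 0; [|w| <= 1] bounds all derivatives uniformly on a neighbourhood of [x]. *)
Lemma is_series_Re_Cmult_cexp_unit (u w : C) (x : R) : Cmod u <= 1 -> Cmod w <= 1 ->
  is_series (fun n => Re (u * pow_n w n) / INR (fact n) * x ^ n) (Re (u * cexp (RtoC x * w))).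
Proof.
  intros Hu Hw. apply is_pseries_R.
  apply (is_pseries_ext (fun n => Derive_n (fun s => Re (u * cexp (RtoC s * w))) n 0
                                  / INR (fact n))).
  { intros n. rewrite Derive_n_Re_Cmult_cexp, Cmult_0_l, cexp_0, Cmult_1_r. reflexivity. }
  apply (mk_pseries (fun s => Re (u * cexp (RtoC s * w))) (exp (Rabs x + 1))
                    (Finite (Rabs x + 1))); [|simpl; lra].
  intros n s Hs. simpl in Hs. split; [apply ex_derive_n_Re_Cmult_cexp|].
  rewrite Derive_n_Re_Cmult_cexp. eapply Rle_trans; [apply re_le_Cmod|].
  rewrite !Cmod_mult, Cmod_pow_n, Cmod_cexp.
  assert (Hwn : Cmod w ^ n <= 1)
    by (rewrite <- (pow1 n); apply pow_incr; split; [apply Cmod_ge_0|exact Hw]).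
  assert (Hexp : exp (Re (RtoC s * w)) <= exp (Rabs x + 1)).
  { apply exp_le_compat. simpl. rewrite Rmult_0_l, Rminus_0_r.
    apply Rle_trans with (Rabs (s * Re w)); [apply Rle_abs|].
    rewrite Rabs_mult. generalize (re_le_Cmod w) (Rabs_pos s) (Rabs_pos (Re w)); nra. }
  rewrite <- (Rmult_1_l (exp (Rabs x + 1))).
  apply Rmult_le_compat; [|apply Rlt_le, exp_pos|  |exact Hexp].
  - apply Rmult_le_pos; [apply Cmod_ge_0|apply pow_le, Cmod_ge_0].
  - rewrite <- (Rmult_1_l 1). apply Rmult_le_compat; auto using Cmod_ge_0, pow_le.
Qed.

Lemma is_series_Re_Cmult_cexp (u z : C) : Cmod u <= 1 ->
  is_series (fun n => Re (u * pow_n z n) / INR (fact n)) (Re (u * cexp z)).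
Proof.
  intros Hu. set (N := Cmod z + 1).
  assert (HN : 0 < N) by (unfold N; generalize (Cmod_ge_0 z); lra).
  set (w := (RtoC (/ N) * z)%C).
  assert (Hz : z = (RtoC N * w)%C).
  { unfold w. rewrite Cmult_assoc, <- RtoC_mult, Rinv_r, Cmult_1_l by lra. reflexivity. }
  assert (Hw : Cmod w <= 1).
  { unfold w. rewrite Cmod_mult, Cmod_R, Rabs_right by (apply Rle_ge, Rlt_le, Rinv_0_lt_compat, HN).
    apply Rmult_le_reg_l with N; [exact HN|]. rewrite <- Rmult_assoc, Rinv_r by lra.
    unfold N; lra. }
  rewrite Hz. apply (is_series_ext (fun n => Re (u * pow_n w n) / INR (fact n) * N ^ n));
    [|now apply is_series_Re_Cmult_cexp_unit].
  intros n. rewrite pow_n_Cmult, pow_n_RtoC.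
  replace (u * (RtoC (N ^ n) * pow_n w n))%C with (u * pow_n w n * RtoC (N ^ n))%C by Cring.
  rewrite re_scal_r. unfold Rdiv. Rring.
Qed.

Lemma cexp_series (z : C) :
  is_series (fun n => pow_n z n * RtoC (/ INR (fact n)))%C (cexp z).
Proof.
  apply is_series_C; split.
  - apply (is_series_ext (fun n => Re (RtoC 1 * pow_n z n) / INR (fact n))).
    + intros n. rewrite Cmult_1_l, re_scal_r. reflexivity.
    + rewrite <- (Cmult_1_l (cexp z)). apply is_series_Re_Cmult_cexp. rewrite Cmod_1; lra.
  - assert (HIm : forall v : C, Re ((0, -1) * v)%C = Im v)
      by (intros [v1 v2]; simpl; ring).
    apply (is_series_ext (fun n => Re ((0, -1) * pow_n z n) / INR (fact n))).
    + intros n. rewrite HIm, im_scal_r. reflexivity.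
    + rewrite <- HIm. apply is_series_Re_Cmult_cexp.
      apply Req_le. unfold Cmod; simpl.
      replace (0 * (0 * 1) + -1 * (-1 * 1)) with 1 by Rring. exact sqrt_1.
Qed.

Lemma C_eq_0 (z : C) : Re z = 0 -> Im z = 0 -> z = 0%C.
Proof. destruct z as [x y]; simpl; intros -> ->; reflexivity. Qed.

Lemma C_eq_0_dec (z : C) : z = 0%C \/ z <> 0%C.
Proof.
  destruct (Req_EM_T (Re z) 0) as [HRe|HRe]; [destruct (Req_EM_T (Im z) 0) as [HIm|HIm]|].
  - left. now apply C_eq_0.
  - right. intros ->. now apply HIm.
  - right. intros ->. now apply HRe.
Qed.

(* Coquelicot's [/ 0] is a junk value, but it is multiplied by [0]. *)
Lemma Cdiv_0_r (c : C) : (c / 0)%C = 0%C.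
Proof.
  destruct c as [x y]. unfold Cdiv, Cinv, Cmult, RtoC; simpl.
  f_equal; unfold Rdiv; rewrite Ropp_0, !Rmult_0_l, !Rmult_0_r; ring.
Qed.

Lemma cpow_neq_0_l (z s : C) : z <> 0%C -> cpow z s = cexp (s * clog z)%C.
Proof.
  intros Hz. unfold cpow.
  destruct (Req_EM_T (Re z) 0), (Req_EM_T (Im z) 0); auto.
  exfalso. now apply Hz, C_eq_0.
Qed.

Lemma cpow_0_l (s : C) : Re s <> 0 -> cpow 0%C s = 0%C.
Proof.
  intros Hs. unfold cpow. simpl Re; simpl Im.
  destruct (Req_EM_T 0 0) as [_|]; [|lra].
  destruct (Req_EM_T (Re s) 0); [contradiction|reflexivity].
Qed.

Lemma cpow_opp_nat (z : C) (n : nat) : z <> 0%C ->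
  (cpow z (RtoC (- INR n)) * pow_n z n)%C = 1%C.
Proof.
  intros Hz. rewrite cpow_neq_0_l by exact Hz. rewrite <- (cexp_clog z Hz) at 2.
  rewrite <- cexp_nat_mult, <- cexp_add, <- cexp_0. f_equal.
  rewrite RtoC_opp. Cring.
Qed.

(* Dividing by [z ^ (-n)] is multiplying by [z ^ n], also at [z = 0] thanks to [0 ^ 0 = 1]. *)
Lemma Cdiv_cpow_opp_nat (c z : C) (n : nat) :
  (c / cpow z (RtoC (- INR n)))%C = (c * pow_n z n)%C.
Proof.
  destruct (C_eq_0_dec z) as [->|Hz].
  - destruct n as [|n].
    + assert (H1 : cpow 0%C (RtoC (- INR 0)) = 1%C).
      { unfold cpow; simpl. replace (- 0) with 0 by ring.
        destruct (Req_EM_T 0 0); [reflexivity|lra]. }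
      rewrite H1, pow_n_C_O. field.
    + rewrite cpow_0_l by (change (- INR (S n) <> 0); rewrite S_INR; generalize (pos_INR n); lra).
      now rewrite pow_n_C_S, Cmult_0_l, Cmult_0_r, Cdiv_0_r.
  - generalize (cpow_opp_nat z n Hz). intros Hprod.
    assert (Hcpow : cpow z (RtoC (- INR n)) <> 0%C)
      by (intros H0; rewrite H0, Cmult_0_l in Hprod; injection Hprod; lra).
    revert Hprod Hcpow. generalize (cpow z (RtoC (- INR n))) (pow_n z n).
    intros e p Hprod He. unfold Cdiv. rewrite <- (Cmult_1_l (/ e)%C), <- Hprod.
    field. exact He.
Qed.

(** * Identification of power series coefficients *)

Lemma CV_radius_pos (alpha : nat -> R) (s : R) :
  0 < s -> ex_series (fun k => alpha k * s ^ k) -> Rbar_lt 0 (CV_radius alpha).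
Proof.
  intros Hs He. apply ex_series_lim_0 in He.
  destruct (filterlim_bounded (V := R_NormedModule) (fun k => alpha k * s ^ k)) as [M HM];
    [now exists 0|].
  apply Rbar_lt_le_trans with (Finite s); [exact Hs|].
  apply (proj1 (CV_radius_bounded alpha)). exists M. intros n. apply HM.
Qed.

Lemma pseries_coef_unique_R (alpha beta : nat -> R) (delta : R) : 0 < delta ->
  (forall s, Rabs s < delta -> exists l,
     is_series (fun k => alpha k * s ^ k) l /\ is_series (fun k => beta k * s ^ k) l) ->
  forall n, alpha n = beta n.
Proof.
  intros Hd H n.
  destruct (H (delta / 2)) as [l [Ha Hb]]; [rewrite Rabs_right; lra|].
  apply PSeries_ext_recip.
  - apply (CV_radius_pos alpha (delta / 2)); [lra|now exists l].
  - apply (CV_radius_pos beta (delta / 2)); [lra|now exists l].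
  - exists (mkposreal delta Hd). intros s Hs.
    change (Rabs (s - 0) < delta) in Hs. rewrite Rminus_0_r in Hs.
    destruct (H s Hs) as [l' [Ha' Hb']].
    rewrite (is_pseries_unique alpha s l'), (is_pseries_unique beta s l');
      [reflexivity|apply is_pseries_R, Hb'|apply is_pseries_R, Ha'].
Qed.

Lemma is_series_pow_RtoC_C (alpha : nat -> C) (s : R) (l : C) :
  is_series (fun k => alpha k * pow_n (RtoC s) k)%C l ->
  is_series (fun k => Re (alpha k) * s ^ k) (Re l) /\
  is_series (fun k => Im (alpha k) * s ^ k) (Im l).
Proof.
  intros H. apply is_series_C in H as [HRe HIm]. split.
  - apply (is_series_ext _ _ _ (fun k => f_equal Re (f_equal _ (pow_n_RtoC s k)))) in HRe.
    exact (is_series_ext _ _ _ (fun k => re_scal_r _ _) HRe).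
  - apply (is_series_ext _ _ _ (fun k => f_equal Im (f_equal _ (pow_n_RtoC s k)))) in HIm.
    exact (is_series_ext _ _ _ (fun k => im_scal_r _ _) HIm).
Qed.

Lemma pseries_coef_unique_C (alpha beta : nat -> C) (delta : R) : 0 < delta ->
  (forall s : R, Rabs s < delta -> exists l : C,
     is_series (fun k => alpha k * pow_n (RtoC s) k)%C l /\
     is_series (fun k => beta k * pow_n (RtoC s) k)%C l) ->
  forall n, alpha n = beta n.
Proof.
  intros Hd H n. apply injective_projections.
  - apply (pseries_coef_unique_R (fun k => Re (alpha k)) (fun k => Re (beta k)) delta Hd).
    intros s Hs. destruct (H s Hs) as [l [Ha Hb]]. exists (Re l).
    split; [apply (is_series_pow_RtoC_C _ _ _ Ha)|apply (is_series_pow_RtoC_C _ _ _ Hb)].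
  - apply (pseries_coef_unique_R (fun k => Im (alpha k)) (fun k => Im (beta k)) delta Hd).
    intros s Hs. destruct (H s Hs) as [l [Ha Hb]]. exists (Im l).
    split; [apply (is_series_pow_RtoC_C _ _ _ Ha)|apply (is_series_pow_RtoC_C _ _ _ Hb)].
Qed.

(** * Estimates for the summands *)

Lemma periodic_bounded (g : nat -> R) (p : nat) :
  (0 < p)%nat -> (forall m, g (m + p)%nat = g m) -> exists X, forall n, g n <= X.
Proof.
  intros Hp Hper.
  assert (Hmod : forall k m, g (m + k * p)%nat = g m).
  { induction k as [|k IH]; intros m; [now rewrite Nat.add_0_r|].
    replace (m + S k * p)%nat with (m + k * p + p)%nat by lia. now rewrite Hper. }
  exists (MaxRlist (map g (seq 0 p))). intros n.
  rewrite (Nat.div_mod_eq n p), Nat.mul_comm, Nat.add_comm, Hmod.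
  apply MaxRlist_P1, in_map, in_seq. split; [lia|]. apply Nat.mod_upper_bound. lia.
Qed.

Lemma dirichlet_char_bounded (f : nat) (chi : nat -> C) :
  is_dirichlet_char f chi -> exists X, forall n, Cmod (chi n) <= X.
Proof.
  intros [Hf [Hper _]].
  apply (periodic_bounded (fun n => Cmod (chi n)) f); [lia|].
  intros m. simpl. now rewrite Hper.
Qed.

Lemma finite_bound_lt_1 (r : nat) (g : nat -> R) : (forall j, (j < r)%nat -> g j < 1) ->
  exists rho, 0 < rho < 1 /\ forall j, (j < r)%nat -> g j <= rho.
Proof.
  induction r as [|r IH]; intros Hg.
  - exists (1 / 2). split; [lra|intros j Hj; lia].
  - destruct IH as [rho [Hrho Hle]]; [intros j Hj; apply Hg; lia|].
    exists (Rmax rho (g r)). split.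
    + split; [apply Rlt_le_trans with rho; [lra|apply Rmax_l]|].
      apply Rmax_lub_lt; [lra|apply Hg; lia].
    + intros j Hj. destruct (Nat.eq_dec j r) as [->|Hjr]; [apply Rmax_r|].
      eapply Rle_trans; [apply Hle; lia|apply Rmax_l].
Qed.

Lemma Re_Im_fold_RtoC (h : nat -> R) (l : list nat) :
  (forall j, In j l -> 0 <= h j) ->
  0 <= Re (fold_right (fun j acc => (RtoC (h j) + acc)%C) 0%C l) /\
  Im (fold_right (fun j acc => (RtoC (h j) + acc)%C) 0%C l) = 0.
Proof.
  induction l as [|j l IH]; intros Hh; simpl; [lra|].
  destruct IH as [HRe HIm]; [intros i Hi; apply Hh; now right|].
  unfold Re, Im in *. rewrite HIm. generalize (Hh j (or_introl eq_refl)). lra.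
Qed.

Lemma Re_Im_shift (x : C) (r : nat) (w : nat -> R) (m : nat -> nat) :
  (forall j, (j < r)%nat -> 0 <= w j) ->
  Re x <= Re (shift x r w m) /\ Im (shift x r w m) = Im x.
Proof.
  intros Hw. unfold shift, csum.
  destruct (Re_Im_fold_RtoC (fun j => w j * INR (m j)) (seq 0 r)) as [HRe HIm].
  { intros j Hj. apply in_seq in Hj. apply Rmult_le_pos; [apply Hw; lia|apply pos_INR]. }
  unfold Re, Im in *. simpl. rewrite HIm. lra.
Qed.

Lemma Cmod_cpow (q y : C) : q <> 0%C -> Cmod (cpow q y) = exp (Re (y * clog q)%C).
Proof. intros Hq. rewrite cpow_neq_0_l by exact Hq. apply Cmod_cexp. Qed.

Lemma Cmod_fold_prod_le (g : nat -> C) (X : R) (l : list nat) :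
  (forall j, Cmod (g j) <= X) ->
  Cmod (fold_right (fun j acc => (g j * acc)%C) 1%C l) <= X ^ length l.
Proof.
  intros Hg. assert (HX : 0 <= X) by (eapply Rle_trans; [apply Cmod_ge_0|apply (Hg 0%nat)]).
  induction l as [|j l IH]; simpl; [rewrite Cmod_1; lra|].
  rewrite Cmod_mult. apply Rmult_le_compat; auto using Cmod_ge_0.
Qed.

Lemma Re_fold_mult_le (a : nat -> C) (m : nat -> nat) (L : C) (K : R) (l : list nat) :
  (forall j, In j l -> Re (a j * L)%C <= K) ->
  Re (fold_right (fun j acc => (a j * RtoC (INR (m j)) + acc)%C) 0%C l * L)%C
    <= INR (fold_right (fun j acc => (m j + acc)%nat) 0%nat l) * K.
Proof.
  induction l as [|j l IH]; intros Hl; simpl fold_right.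
  - destruct L. simpl. lra.
  - rewrite plus_INR.
    set (sl := fold_right (fun j acc => (a j * RtoC (INR (m j)) + acc)%C) 0%C l) in *.
    replace (Re ((a j * RtoC (INR (m j)) + sl) * L)%C)
      with (INR (m j) * Re (a j * L)%C + Re (sl * L)%C)
      by (destruct (a j), sl, L; simpl; ring).
    generalize (Hl j (or_introl eq_refl)) (IH (fun i Hi => Hl i (or_intror Hi))) (pos_INR (m j)).
    nra.
Qed.

Lemma Cmod_cpow_csum_le (q : C) (r : nat) (a : nat -> C) (m : nat -> nat) (rho : R) :
  q <> 0%C -> 0 < rho -> (forall j, (j < r)%nat -> Cmod (cpow q (a j)) <= rho) ->
  Cmod (cpow q (csum r (fun j => a j * RtoC (INR (m j)))%C)) <= rho ^ nsum r m.
Proof.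
  intros Hq Hrho Ha. rewrite Cmod_cpow, <- Rpower_pow by assumption. unfold Rpower.
  apply exp_le_compat. apply Re_fold_mult_le.
  intros j Hj. apply in_seq in Hj.
  rewrite <- (ln_exp (Re (a j * clog q)%C)). apply ln_le; [apply exp_pos|].
  rewrite <- Cmod_cpow by exact Hq. apply Ha. lia.
Qed.

Lemma Cmod_coef_le (q : C) (chi : nat -> C) (r : nat) (a : nat -> C) (m : nat -> nat)
    (X rho : R) :
  q <> 0%C -> (forall n, Cmod (chi n) <= X) -> 0 < rho ->
  (forall j, (j < r)%nat -> Cmod (cpow q (a j)) <= rho) ->
  Cmod (coef q chi r a m) <= 2 ^ r * X ^ r * rho ^ nsum r m.
Proof.
  intros Hq Hchi Hrho Ha. unfold coef.
  rewrite !Cmod_mult, !Cmod_R, pow_1_abs, Rmult_1_r, Rabs_right by (apply Rle_ge, pow_le; lra).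
  apply Rmult_le_compat; auto using Cmod_ge_0, Cmod_cpow_csum_le.
  - apply Rmult_le_pos; [apply pow_le; lra|apply Cmod_ge_0].
  - apply Rmult_le_compat_l; [apply pow_le; lra|].
    unfold cprod. rewrite <- (length_seq r 0) at 2. now apply Cmod_fold_prod_le.
Qed.

Lemma Cmod_qint_shift_le (q x : C) (r : nat) (w : nat -> R) (m : nat -> nat) :
  q <> 0%C -> Cmod q < 1 -> 0 <= Re x -> (forall j, (j < r)%nat -> 0 <= w j) ->
  Cmod (qint q (shift x r w m)) <= (1 + exp (- Im x * carg q)) / (1 - Cmod q).
Proof.
  intros Hq Hq1 Hx Hw. unfold qint.
  assert (Hden : 1 - Cmod q <= Cmod (1 - q)%C).
  { rewrite <- Cmod_1 at 1. replace (RtoC 1) with (1 - q + q)%C at 1 by Cring.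
    generalize (Cmod_triangle (1 - q) q). lra. }
  assert (H1q : (1 - q)%C <> 0%C)
    by (intros H0; rewrite H0, Cmod_0 in Hden; lra).
  rewrite Cmod_div by exact H1q. unfold Rdiv.
  apply Rmult_le_compat; [apply Cmod_ge_0|apply Rlt_le, Rinv_0_lt_compat, Cmod_gt_0, H1q| |
                          apply Rinv_le_contravar; lra].
  eapply Rle_trans; [apply Cmod_triangle|]. rewrite Cmod_opp, Cmod_1.
  apply Rplus_le_compat_l. rewrite Cmod_cpow by exact Hq.
  apply exp_le_compat. unfold clog.
  destruct (Re_Im_shift x r w m Hw) as [HRe HIm].
  assert (Hln : ln (Cmod q) < 0)
    by (rewrite <- ln_1; apply ln_increasing; [apply Cmod_gt_0|]; assumption).
  destruct (shift x r w m) as [y1 y2]. simpl in *. subst y2. nra.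
Qed.

(** * Termwise expansion of the generating function *)

Lemma RtoC_fact_neq_0 (k : nat) : RtoC (INR (fact k)) <> 0%C.
Proof. intros H. apply (INR_fact_neq_0 k). now injection H. Qed.

Lemma ex_series_exp (c : R) : ex_series (fun k => c ^ k / INR (fact k)).
Proof.
  exists (exp c). apply (is_series_ext (fun k => / INR (fact k) * c ^ k)).
  - intros k. unfold Rdiv. apply Rmult_comm.
  - apply is_pseries_R, is_exp_Reals.
Qed.

Lemma Cmod_taylor_term_le (c Q t : C) (A B : R) (k : nat) :
  Cmod c <= A -> Cmod Q <= B ->
  Cmod (c * pow_n Q k * RtoC (/ INR (fact k)) * pow_n t k)%C
    <= A * ((B * Cmod t) ^ k / INR (fact k)).
Proof.
  intros Hc HQ. rewrite !Cmod_mult, !Cmod_pow_n, Cmod_R.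
  rewrite Rabs_right by (apply Rle_ge, Rlt_le, Rinv_0_lt_compat, INR_fact_lt_0).
  replace (A * ((B * Cmod t) ^ k / INR (fact k)))
    with (A * B ^ k * / INR (fact k) * Cmod t ^ k)
    by (rewrite Rpow_mult_distr; unfold Rdiv; ring).
  apply Rmult_le_compat_r; [apply pow_le, Cmod_ge_0|].
  apply Rmult_le_compat_r; [apply Rlt_le, Rinv_0_lt_compat, INR_fact_lt_0|].
  apply Rmult_le_compat; auto using Cmod_ge_0, pow_le.
  apply pow_incr. split; [apply Cmod_ge_0|exact HQ].
Qed.

(* [S k] is the [k]-th Taylor coefficient of [t |-> sum_m c m exp (Q m t)], computed termwise. *)
Definition termwise_taylor (r : nat) (c Q : (nat -> nat) -> C) (S : nat -> C) : Prop :=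
  (forall k, is_msum r (fun m => c m * pow_n (Q m) k * RtoC (/ INR (fact k)))%C (S k)) /\
  forall t : C, exists T : C,
    is_series (fun k => S k * pow_n t k)%C T /\
    is_msum r (fun m => c m * cexp (Q m * t))%C T.

Lemma termwise_taylor_const (r : nat) (c Q : (nat -> nat) -> C) (G : C) :
  (forall m, Q m = RtoC 1) -> is_msum r c G ->
  termwise_taylor r c Q (fun k => G * RtoC (/ INR (fact k)))%C.
Proof.
  intros HQ HG. split.
  - intros k. apply (is_msum_ext r (fun m => c m * RtoC (/ INR (fact k)))%C).
    + intros m. rewrite HQ, pow_n_RtoC, pow1, Cmult_1_r. reflexivity.
    + now apply is_msum_Cmult_r.
  - intros t. exists (G * cexp t)%C. split.
    + apply (is_series_ext (fun k => G * (pow_n t k * RtoC (/ INR (fact k))))%C).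
      * intros k. Cring.
      * apply is_series_Cmult_l, cexp_series.
    + apply (is_msum_ext r (fun m => c m * cexp t)%C).
      * intros m. now rewrite HQ, Cmult_1_l.
      * now apply is_msum_Cmult_r.
Qed.

Lemma termwise_taylor_dominated (r : nat) (c Q : (nat -> nat) -> C) (A rho B : R) :
  Rabs rho < 1 -> (forall m, Cmod (c m) <= A * rho ^ nsum r m) -> (forall m, Cmod (Q m) <= B) ->
  exists S, termwise_taylor r c Q S.
Proof.
  intros Hrho Hc HQ.
  set (F := fun m k => (c m * pow_n (Q m) k * RtoC (/ INR (fact k)))%C).
  assert (HF : forall t m k, Cmod (F m k * pow_n t k)%C
                             <= A * rho ^ nsum r m * ((B * Cmod t) ^ k / INR (fact k)))
    by (intros t m k; apply Cmod_taylor_term_le; [apply Hc|apply HQ]).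
  assert (Hswap : forall t, exists S T,
    (forall k, is_msum r (fun m => F m k * pow_n t k)%C (S k)) /\ is_series S T /\
    is_msum r (fun m => c m * cexp (Q m * t))%C T).
  { intros t.
    destruct (is_msum_series_swap r (fun m k => F m k * pow_n t k)%C A rho
                (fun k => (B * Cmod t) ^ k / INR (fact k)) Hrho (ex_series_exp _) (HF t))
      as [S [T [HS [_ [HT Hrows]]]]].
    exists S, T. split; [exact HS|]. split; [exact HT|].
    apply Hrows. intros m. unfold F.
    apply (is_series_ext (fun k => c m * (pow_n (Q m * t)%C k * RtoC (/ INR (fact k))))%C).
    - intros k. rewrite pow_n_Cmult. generalize (pow_n (Q m) k) (pow_n t k). intros; Cring.
    - apply is_series_Cmult_l, cexp_series. }
  destruct (Hswap (RtoC 1)) as [S [_ [HS _]]].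
  exists S. split.
  - intros k. apply (is_msum_ext r (fun m => F m k * pow_n (RtoC 1) k)%C); [|apply HS].
    intros m. rewrite pow_n_RtoC, pow1, Cmult_1_r. reflexivity.
  - intros t. destruct (Hswap t) as [St [T [HSt [HT HcT]]]].
    exists T. split; [|exact HcT].
    apply (is_series_ext St); [|exact HT]. intros k.
    apply (is_msum_unique r (fun m => F m k * pow_n t k)%C); [apply HSt|].
    apply is_msum_Cmult_r. apply (is_msum_ext r (fun m => F m k * pow_n (RtoC 1) k)%C); [|apply HS].
    intros m. rewrite pow_n_RtoC, pow1, Cmult_1_r. reflexivity.
Qed.

Lemma termwise_taylor_coef (r : nat) (c Q : (nat -> nat) -> C) (S E : nat -> C) (delta : R) :
  0 < delta -> termwise_taylor r c Q S ->
  (forall t : C, Cmod t < delta -> exists G : C,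
     is_msum r (fun m => c m * cexp (Q m * t))%C G /\
     is_series (fun n => E n * pow_n t n / RtoC (INR (fact n)))%C G) ->
  forall n, is_msum r (fun m => c m * pow_n (Q m) n)%C (E n).
Proof.
  intros Hd [HS Hgen] HE n.
  assert (Hcoef : forall k, S k = (E k * RtoC (/ INR (fact k)))%C).
  { apply (pseries_coef_unique_C _ _ delta Hd). intros s Hs.
    destruct (HE (RtoC s)) as [G [HG HEG]]; [now rewrite Cmod_R|].
    destruct (Hgen (RtoC s)) as [T [HST HT]].
    rewrite (is_msum_unique r _ _ _ HT HG) in HST.
    exists G. split; [exact HST|].
    apply (is_series_ext (fun k => E k * pow_n (RtoC s) k / RtoC (INR (fact k)))%C); [|exact HEG].
    intros k. rewrite RtoC_inv by apply INR_fact_neq_0. Cfield. apply RtoC_fact_neq_0. }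
  apply (is_msum_ext r
    (fun m => c m * pow_n (Q m) n * RtoC (/ INR (fact n)) * RtoC (INR (fact n)))%C).
  - intros m. rewrite RtoC_inv by apply INR_fact_neq_0. Cfield. apply RtoC_fact_neq_0.
  - replace (E n) with (S n * RtoC (INR (fact n)))%C.
    + apply is_msum_Cmult_r, HS.
    + rewrite Hcoef, RtoC_inv by apply INR_fact_neq_0. Cfield. apply RtoC_fact_neq_0.
Qed.

Lemma qint_0_l (y : C) : Re y <> 0 -> qint 0%C y = 1%C.
Proof.
  intros Hy. unfold qint. rewrite cpow_0_l by exact Hy.
  unfold Cminus. rewrite Copp_0, Cplus_0_r. Cfield.
Qed.

Theorem theorem8
  (q : C) (hq : Cmod q < 1)
  (r : nat) (w : nat -> R) (hw : forall j, (j < r)%nat -> 0 < w j)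
  (a : nat -> C)
  (ha : forall j, (j < r)%nat -> Cmod (cpow q (a j)) < 1)
  (x : C) (hx : 0 < Re x)
  (f : nat) (chi : nat -> C) (hchi : has_conductor f chi) (hf : Nat.Odd f)
  (E : nat -> C)
  (hE : exists delta : R, 0 < delta /\
     forall t : C, Cmod t < delta ->
       exists G : C,
         is_msum r (gen_term q chi r w a x t) G /\
         is_series (fun n => (E n * pow_n t n / RtoC (INR (fact n)))%C) G)
  (n : nat) :
  is_msum r (l_term q chi r w a x (RtoC (- INR n))) (E n).
Proof.
  destruct hE as [delta [Hdelta hE]].
  assert (hw0 : forall j, (j < r)%nat -> 0 <= w j) by (intros j Hj; now apply Rlt_le, hw).
  set (c := coef q chi r a). set (Q := fun m => qint q (shift x r w m)).
  assert (HS : exists S, termwise_taylor r c Q S).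
  { destruct (C_eq_0_dec q) as [Hq|Hq].
    - destruct (hE 0%C) as [G [HG _]]; [rewrite Cmod_0; lra|].
      exists (fun k => G * RtoC (/ INR (fact k)))%C. apply termwise_taylor_const.
      + intros m. unfold Q. rewrite Hq. apply qint_0_l.
        destruct (Re_Im_shift x r w m hw0). lra.
      + apply (is_msum_ext r (gen_term q chi r w a x 0%C)); [|exact HG].
        intros m. unfold gen_term. rewrite Cmult_0_r, cexp_0, Cmult_1_r. reflexivity.
    - destruct (dirichlet_char_bounded f chi (proj1 hchi)) as [X HX].
      destruct (finite_bound_lt_1 r (fun j => Cmod (cpow q (a j))) ha) as [rho [Hrho Hrhoj]].
      apply (termwise_taylor_dominated r c Q (2 ^ r * X ^ r) rho
               ((1 + exp (- Im x * carg q)) / (1 - Cmod q))).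
      + rewrite Rabs_right; lra.
      + intros m. apply Cmod_coef_le; auto; lra.
      + intros m. apply Cmod_qint_shift_le; auto; lra. }
  destruct HS as [S HS].
  apply (is_msum_ext r (fun m => c m * pow_n (Q m) n)%C).
  - intros m. symmetry. apply Cdiv_cpow_opp_nat.
  - exact (termwise_taylor_coef r c Q S E delta Hdelta HS hE n).
Qed.
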